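(* Let $\mathfrak{C}=(U,M,I,N,J)$ be a formal decision context, $\mathfrak{C}^c=(U,M,I,N,\neg J)$ its complement, and $E\subseteq M$. Then: (1) $E$ is a II-consistent set of $\mathfrak{C}$ if and only if $E$ is an I-consistent set of $\mathfrak{C}^c$; (2) $E$ is a II-reduction of $\mathfrak{C}$ if and only if $E$ is an I-reduction of $\mathfrak{C}^c$.
   Context: Formal context $(U,M,I)$: $U$ and $M$ are finite nonempty sets and $I\subseteq U\times M$. For $O\subseteq U$ and $C\subseteq M$ define: - $O^{\uparrow}=\{a\mid\forall x\in O\,((x,a)\in I)\}$ and $C^{\downarrow}=\{x\mid\forall a\in C\,((x,a)\in I)\}$; - $O^{\lozenge}=\{a\in M\mid\exists x\in O\,((x,a)\in I)\}$ and $C^{\square}=\{x\in U\mid\forall a\in M\,((x,a)\in I\Rightarrow a\in C)\}$; - $O^{\square}=\{a\in M\mid\forall x\in U\,((x,a)\in I\Rightarrow x\in O)\}$ and $C^{\lozenge}=\{x\in U\mid\exists a\in C\,((x,a)\in I)\}$. The corresponding pairs are: formal concepts $(O,C)$ with $O^\uparrow=C$ and $C^\downarrow=O$ (set $L$); object-oriented concepts with $O^\square=C$ and $C^\lozenge=O$ (set $L_O$); property-oriented concepts with $O^\lozenge=C$ and $C^\square=O$ (set $L_P$). A formal decision context $\mathfrak{C}=(U,M,I,N,J)$ has conditional context $(U,M,I)$ and decision context $(U,N,J)$, with $M\cap N=\emptyset$. Its complement is $\mathfrak{C}^c=(U,M,I,N,\neg J)$, where $(x,t)\in\neg J$ iff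 $(x,t)\notin J$. For $E\subseteq M$, put $I_E=I\cap(U\times E)$; the subcontext $\mathfrak{C}(E)=(U,E,I_E,N,J)$ has conditional context $(U,E,I_E)$. An I-decision rule of a formal decision context is $(O,C)\rightarrow(Y,D)$ with $(O,C)\in L_O$ of its conditional context, $(Y,D)\in L$ of its decision context, $O\subseteq Y$, $O\ne\emptyset$ and $Y\ne U$. A II-decision rule is $(O,C)\rightarrow(Y,D)$ with $(O,C)\in L_O$ of its conditional context, $(Y,D)\in L_P$ of its decision context, $O\subseteq Y$, and (as the paper restricts II-rules in applications) $O\ne\emptyset$ and $Y\ne U$. $\mathfrak{R}_I(\cdot)$ and $\mathfrak{R}_{II}(\cdot)$ denote the sets of these rules. For a rule $(O,C)\rightarrow(Y,D)$ of $\mathfrak{C}(E)$ (respectively $\mathfrak{C}^c(E)=(U,E,I_E,N,\neg J)$) and a rule $(O_1,C_1)\rightarrow(Y_1,D_1)$ of $\mathfrak{C}$ (respectively $\mathfrak{C}^c$) of the same kind, the first implies the second iff $O_1\subseteq O\subseteq Y\subseteq Y_1$. $E$ is II-consistent for $\mathfrak{C}$ if every rule in $\mathfrak{R}_{II}(\mathfrak{C})$ is implied by some rule in $\mathfrak{R}_{II}(\mathfrak{C}(E))$. $E$ is I-consistent for $\mathfrak{C}^c$ if every rule in $\mathfrak{R}_I(\mathfrak{C}^c)$ is implied by some rule in $\mathfrak{R}_I(\mathfrak{C}^c(E))$. A II-reduction (I-reduction) is a II-consistent (I-consistent) set none of whose proper subsets is II-consistent (I-consistent). *)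

From mathcomp Require Import all_boot.
Set Implicit Arguments. Unset Strict Implicit. Unset Printing Implicit Defensive.

Section Ctx.
Variables (U M N : finType).

(* Conditional context restricted to attribute set E : (U, E, I_E). *)
Definition obox (E : {set M}) (I : U -> M -> bool) (O : {set U}) : {set M} :=
  [set a in E | [forall x, I x a ==> (x \in O)]].
Definition adia (E : {set M}) (I : U -> M -> bool) (C : {set M}) : {set U} :=
  [set x | [exists a, [&& a \in C, a \in E & I x a]]].
Definition obj_concept (E : {set M}) (I : U -> M -> bool) (O : {set U}) (C : {set M}) :=
  obox E I O = C /\ adia E I C = O.

Definition dup (J : U -> N -> bool) (Y : {set U}) : {set N} :=
  [set t | [forall x in Y, J x t]].
Definition ddown (J : U -> N -> bool) (D : {set N}) : {set U} :=
  [set x | [forall t in D, J x t]].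
Definition formal_concept (J : U -> N -> bool) (Y : {set U}) (D : {set N}) :=
  dup J Y = D /\ ddown J D = Y.
Definition odia (J : U -> N -> bool) (Y : {set U}) : {set N} :=
  [set t | [exists x in Y, J x t]].
Definition dbox (J : U -> N -> bool) (D : {set N}) : {set U} :=
  [set x | [forall t, J x t ==> (t \in D)]].
Definition prop_concept (J : U -> N -> bool) (Y : {set U}) (D : {set N}) :=
  odia J Y = D /\ dbox J D = Y.

Definition rule_I (E : {set M}) (I : U -> M -> bool) (J : U -> N -> bool)
  (O : {set U}) (C : {set M}) (Y : {set U}) (D : {set N}) :=
  [/\ obj_concept E I O C, formal_concept J Y D, O \subset Y,
      O != set0 & Y != setT].
Definition rule_II (E : {set M}) (I : U -> M -> bool) (J : U -> N -> bool)
  (O : {set U}) (C : {set M}) (Y : {set U}) (D : {set N}) :=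
  [/\ obj_concept E I O C, prop_concept J Y D, O \subset Y,
      O != set0 & Y != setT].

Definition negJ (J : U -> N -> bool) : U -> N -> bool := fun x t => ~~ J x t.

(* consistency: every rule of the full context (E = M) is implied by a rule of
   the subcontext C(E), where (O,C)->(Y,D) implies (O1,C1)->(Y1,D1)
   iff O1 ⊆ O ⊆ Y ⊆ Y1. *)
Definition consistent_for
  (rule : {set M} -> (U -> M -> bool) -> (U -> N -> bool) ->
          {set U} -> {set M} -> {set U} -> {set N} -> Prop)
  (I : U -> M -> bool) (J : U -> N -> bool) (E : {set M}) :=
  forall O1 C1 Y1 D1, rule setT I J O1 C1 Y1 D1 ->
    exists O C Y D, rule E I J O C Y D /\
      [/\ O1 \subset O, O \subset Y & Y \subset Y1].

Definition II_consistent I J E := consistent_for rule_II I J E.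
Definition I_consistent_compl I J E := consistent_for rule_I I (negJ J) E.

Definition II_reduction I J E :=
  II_consistent I J E /\ forall F : {set M}, F \proper E -> ~ II_consistent I J F.
Definition I_reduction_compl I J E :=
  I_consistent_compl I J E /\
  forall F : {set M}, F \proper E -> ~ I_consistent_compl I J F.

End Ctx.

(* Complementing the decision relation exchanges the two kinds of decision
   rules: Y^♢ computed in J is the complement of Y^↑ computed in ¬J, and
   D^□ computed in J is (~D)^↓ computed in ¬J.  Hence (Y, D) is a
   property-oriented concept of (U, N, J) iff (Y, ~D) is a formal concept of
   (U, N, ¬J), and (O, C) -> (Y, D) is a II-rule of C(E) iff
   (O, C) -> (Y, ~D) is an I-rule of C^c(E).  Implication between rules only
   looks at O and Y, so consistent sets, and therefore reductions, coincide. *)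

From mathcomp Require Import all_boot.

Set Implicit Arguments.
Unset Strict Implicit.
Unset Printing Implicit Defensive.

Section ComplementDecision.
Variables (U M N : finType).
Implicit Types (I : U -> M -> bool) (J : U -> N -> bool).

Lemma dup_negJ J (Y : {set U}) : dup (negJ J) Y = ~: odia J Y.
Proof.
apply/setP => t; rewrite !inE negb_exists; apply/eq_forallb => x.
by rewrite /negJ negb_and; case: (x \in Y).
Qed.

Lemma ddown_negJ_setC J (D : {set N}) : ddown (negJ J) (~: D) = dbox J D.
Proof.
apply/setP => x; rewrite !inE; apply/eq_forallb => t.
by rewrite !inE /negJ; case: (t \in D); case: (J x t).
Qed.

Lemma prop_concept_formal_negJ J Y D :
  prop_concept J Y D <-> formal_concept (negJ J) Y (~: D).
Proof.
rewrite /prop_concept /formal_concept dup_negJ ddown_negJ_setC; split.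
  by case=> -> ->.
by case=> /(congr1 (@setC _)); rewrite !setCK => -> ->.
Qed.

Lemma rule_II_rule_I_negJ E I J O C Y D :
  rule_II E I J O C Y D <-> rule_I E I (negJ J) O C Y (~: D).
Proof.
by split; case=> objOC conceptYD sOY O0 YT; split=> //;
  apply/prop_concept_formal_negJ.
Qed.

Lemma consistent_for_transfer
    (rule1 rule2 : {set M} -> (U -> M -> bool) -> (U -> N -> bool) ->
                   {set U} -> {set M} -> {set U} -> {set N} -> Prop)
    (f : {set N} -> {set N}) I J1 J2 :
  involutive f ->
  (forall E O C Y D, rule1 E I J1 O C Y D <-> rule2 E I J2 O C Y (f D)) ->
  forall E, consistent_for rule1 I J1 E <-> consistent_for rule2 I J2 E.
Proof.
move=> fK rule12 E; split=> cons O1 C1 Y1 D1 rule_1.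
- have rule_1' : rule1 setT I J1 O1 C1 Y1 (f D1) by apply/rule12; rewrite fK.
  have [O [C [Y [D [ruleE sub]]]]] := cons _ _ _ _ rule_1'.
  by exists O, C, Y, (f D); split=> //; apply/rule12.
- have [O [C [Y [D [ruleE sub]]]]] := cons _ _ _ _ (proj1 (rule12 _ _ _ _ _) rule_1).
  by exists O, C, Y, (f D); split=> //; apply/rule12; rewrite fK.
Qed.

Lemma II_consistent_I_consistent_compl I J E :
  II_consistent I J E <-> I_consistent_compl I J E.
Proof.
apply: (@consistent_for_transfer _ _ (@setC N)); first exact: setCK.
by move=> *; apply: rule_II_rule_I_negJ.
Qed.

End ComplementDecision.

Theorem theorem4p10 (U M N : finType)
  (hU : 0 < #|U|) (hM : 0 < #|M|) (hN : 0 < #|N|)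
  (I : U -> M -> bool) (J : U -> N -> bool) (E : {set M}) :
  (II_consistent I J E <-> I_consistent_compl I J E) /\
  (II_reduction I J E <-> I_reduction_compl I J E).
Proof.
have consE := II_consistent_I_consistent_compl I J.
split; first exact: consE.
by split; case=> consistentE minimalE; split=> [|F sFE /consE];
  by [apply/consE | apply: minimalE].
Qed.
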